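(* Let $\mathbf{L}_1,\dots,\mathbf{L}_n$ be latent factors and $\mathbf{X}_{\mathbf{t}_1},\mathbf{Y}_{\mathbf{t}_1},\dots,\mathbf{X}_{\mathbf{t}_m},\mathbf{Y}_{\mathbf{t}_m}$ observed variables in a causal graph in which $Pa(\mathbf{X}_{\mathbf{t}_s})=\{\mathbf{L}_1,\dots,\mathbf{L}_n\}$ and $Pa(\mathbf{Y}_{\mathbf{t}_s})\subseteq\{\mathbf{L}_1,\dots,\mathbf{L}_n\}$ for all $s$. Let $\mathcal{F}$ be the smallest family of subsets of $\{\mathbf{L}_1,\dots,\mathbf{L}_n\}$ such that (1) $\emptyset, Pa(\mathbf{X}_{\mathbf{t}_1}), Pa(\mathbf{Y}_{\mathbf{t}_1}),\dots,Pa(\mathbf{X}_{\mathbf{t}_m}),Pa(\mathbf{Y}_{\mathbf{t}_m})\in\mathcal{F}$ and (2) $\mathcal{A},\mathcal{B}\in\mathcal{F}$ implies $\mathcal{A}-\mathcal{B},\ \mathcal{B}-\mathcal{A}\in\mathcal{F}$, where $\mathcal{A}-\mathcal{B}=\mathcal{A}\cap\bar{\mathcal{B}}$. Then $\{\mathbf{L}_1\},\{\mathbf{L}_2\},\dots,\{\mathbf{L}_n\}\in\mathcal{F}$ if and only if for any two distinct latent factors $\mathbf{L}_i\neq\mathbf{L}_j$, their child sets are not identical, $Ch(\mathbf{L}_i)\neq Ch(\mathbf{L}_j)$.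
   Context: $Pa(V)$ denotes the set of parents of $V$ in the causal graph. The child set $Ch(\mathbf{L}_i)$ is the set of observed variables among $\mathbf{X}_{\mathbf{t}_1},\mathbf{Y}_{\mathbf{t}_1},\dots,\mathbf{X}_{\mathbf{t}_m},\mathbf{Y}_{\mathbf{t}_m}$ that have $\mathbf{L}_i$ as a parent. *)

From mathcomp Require Import all_boot.
Set Implicit Arguments. Unset Strict Implicit. Unset Printing Implicit Defensive.

(* Latent factors L_1..L_n are indexed by 'I_n.
   A causal graph restricted to the data relevant here is given by the
   parent map  pa : observed -> {set 'I_n}  (parents of observed variables
   are latent factors, by hypothesis). *)

Definition obs (m : nat) := ('I_m * bool)%type.
Definition Xv (m : nat) (s : 'I_m) : obs m := (s, false).
Definition Yv (m : nat) (s : 'I_m) : obs m := (s, true).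

Definition Ch (n m : nat) (pa : obs m -> {set 'I_n}) (i : 'I_n) : {set obs m} :=
  [set v | i \in pa v].

Inductive inF (n m : nat) (pa : obs m -> {set 'I_n}) : {set 'I_n} -> Prop :=
  | inF_empty : inF pa set0
  | inF_pa : forall v, inF pa (pa v)
  | inF_diff : forall A B, inF pa A -> inF pa B -> inF pa (A :&: ~: B).

(* Sets in F cannot separate two latents with the same child set, since the
   parent sets cannot and set difference preserves this.  Conversely, since
   the full set Pa(X_{t_1}) lies in F, F is closed under complement and
   intersection, so it contains the atom of each latent L_i: the intersection
   over all observed v of Pa(v) or of its complement, according as L_i is a
   parent of v.  This atom consists of the latents with the same child set as
   L_i, which is just L_i when child sets are pairwise distinct. *)

From mathcomp Require Import all_boot.

Set Implicit Arguments.
Unset Strict Implicit.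
Unset Printing Implicit Defensive.

Section ParentSetFamily.

Variables (n m : nat) (pa : obs m -> {set 'I_n}).

Lemma inF_setI A B : inF pa A -> inF pa B -> inF pa (A :&: B).
Proof.
have -> : A :&: B = A :&: ~: (A :&: ~: B) by rewrite -!setDE setDDr setDv set0U.
by move=> FA FB; apply: inF_diff => //; apply: inF_diff.
Qed.

Lemma inF_setC A : inF pa [set: 'I_n] -> inF pa A -> inF pa (~: A).
Proof. by move=> FT FA; rewrite -[~: A]setTI; apply: inF_diff. Qed.

Lemma inF_mem_eq_Ch i j A :
  Ch pa i = Ch pa j -> inF pa A -> (i \in A) = (j \in A).
Proof.
move=> eq_Ch; elim=> [|v|B C _ IHB _ IHC]; rewrite ?inE.
- by [].
- by have /setP/(_ v) := eq_Ch; rewrite !inE.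
- by rewrite IHB IHC.
Qed.

Definition atom (i : 'I_n) : {set 'I_n} :=
  \bigcap_(v : obs m) (if i \in pa v then pa v else ~: pa v).

Lemma inF_atom i : inF pa [set: 'I_n] -> inF pa (atom i).
Proof.
move=> FT; apply: (big_ind (inF pa)) => // [A B|v _].
- exact: inF_setI.
- by case: ifP => _; [|apply: inF_setC => //]; apply: inF_pa.
Qed.

Lemma atomE i : atom i = [set j | Ch pa j == Ch pa i].
Proof.
apply/setP=> j; rewrite !inE; apply/bigcapP/eqP=> [j_atom | eq_Ch v _].
  apply/setP=> v; rewrite !inE.
  by move: (j_atom v isT); case: (i \in pa v); rewrite ?inE; [move->|move/negbTE->].
by have /setP/(_ v) := eq_Ch; rewrite !inE; case: ifP; rewrite ?inE => _ ->.
Qed.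

End ParentSetFamily.

Theorem lemmaA4 (n m : nat) (pa : obs m -> {set 'I_n}) :
  0 < m ->
  (forall s : 'I_m, pa (Xv s) = [set: 'I_n]) ->
  ((forall i : 'I_n, inF pa [set i]) <->
   (forall i j : 'I_n, i != j -> Ch pa i != Ch pa j)).
Proof.
move=> m_gt0 paX; split=> [F1 i j | Ch_inj i].
  apply: contra_neq => /inF_mem_eq_Ch/(_ (F1 i)).
  by rewrite !inE eqxx => /esym/eqP.
have FT : inF pa [set: 'I_n] by rewrite -(paX (Ordinal m_gt0)); apply: inF_pa.
suff <- : atom pa i = [set i] by apply: inF_atom.
apply/setP=> j; rewrite atomE !inE.
by apply/eqP/eqP=> [|->//]; apply: contra_eq => /Ch_inj.
Qed.
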